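(* Let $F$ be a field of characteristic $0$, let $k$ be a positive integer and $1\le t\le k$, and let $m,l_1,\dots,l_t$ be non-negative integers with $n=l_1+\cdots+l_t+m$. Let $\psi\colon V_n\to V_{m,l_1,\dots,l_t}$ be the linear isomorphism induced by the substitution $x_i\mapsto x^{1}_{i}$ if $1\le i\le l_1$; $x_i\mapsto x^{2}_{i-l_1}$ if $l_1+1\le i\le l_1+l_2$; $\dots$; $x_i\mapsto x^{t}_{i-(l_1+\cdots+l_{t-1})}$ if $l_1+\cdots+l_{t-1}+1\le i\le l_1+\cdots+l_t$; and $x_i\mapsto z_{i-(l_1+\cdots+l_t)}$ otherwise. Then: (1) $\psi(V_n\cap T(E))=V_{m,l_1,\dots,l_t}\cap T_{\mathbb{Z}}(E^{\infty})$; (2) if $1\cdot l_1+2\cdot l_2+\cdots+t\cdot l_t\le k$, then $\psi(V_n\cap T(E))=V_{m,l_1,\dots,l_t}\cap T_{\mathbb{Z}}(E^{k^\ast})$.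
   Context: $L$ is a vector space over $F$ with basis $e_1,e_2,\dots$, and $E$ is its unital Grassmann algebra (basis $1$ and $e_{i_1}\cdots e_{i_k}$, $i_1<\cdots<i_k$, with $e_ie_j=-e_je_i$). A $\mathbb{Z}$-grading on $E$ is induced by assigning degrees to the $e_i$ and giving a basis monomial the sum of the degrees of its factors ($1$ has degree $0$). $E^{k^\ast}$: $\|e_i\|=1$ for $i=1,\dots,k$ and $\|e_i\|=0$ for $i>k$. $E^{\infty}$: $\|e_i\|=0$ for $i$ even and $\|e_i\|=1$ for $i$ odd. $T(E)$ is the set of ordinary polynomial identities of $E$ in the free associative algebra, and $V_n$ is the space of multilinear polynomials in $x_1,\dots,x_n$. $F\langle X|\mathbb{Z}\rangle$ is the free unital associative algebra on variables each of which has an integer degree $\alpha(x)$ (countably many of each degree); $f(x_1,\dots,x_r)$ is a $\mathbb{Z}$-graded identity of a $\mathbb{Z}$-graded algebra $A$ if it vanishes whenever each $x_j$ is replaced by an element of $A_{\alpha(x_j)}$; $T_{\mathbb{Z}}(A)$ is the set of such. $V_{m,l_1,\dots,l_t}$ is the space of multilinear graded polynomials in the variables $z_1,\dots,z_m$ of degree $0$, $x^1_1,\dots,x^1_{l_1}$ of degree $1$, $\dots$, $x^t_1,\dots,x^t_{l_t}$ of degree $t$. *)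

From HB Require Import structures.
From mathcomp Require Import all_boot all_order all_algebra.
From mathcomp Require Import finmap.
Set Implicit Arguments. Unset Strict Implicit. Unset Printing Implicit Defensive.
Import Order.TTheory GRing.Theory Num.Theory.
Local Open Scope ring_scope.
Local Open Scope fset_scope.

Section Grassmann.
Variable F : fieldType.

(* Basis monomials of the unital Grassmann algebra E: finite sets S of
   generator indices, S = {i_1 < ... < i_r} |-> e_{i_1} ... e_{i_r}.
   CONVENTION: index i : nat stands for the paper's generator e_{i+1}. *)
Notation gmon := {fset nat}.

Record grass := Grass { gterms : seq (gmon * F) }.

Definition gcoef (x : grass) (S : gmon) : F :=
  \sum_(p <- gterms x) (if p.1 == S then p.2 else 0).

Definition gzero (x : grass) : Prop := forall S, gcoef x S = 0.

(* Sign of e_S * e_T (S, T disjoint): (-1)^#{(s,t) in S x T | t < s}. *)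
Definition gsign (S T : gmon) : F :=
  (-1) ^+ (\sum_(s <- enum_fset S) \sum_(t <- enum_fset T) (t < s))%N.

Definition gone : grass := Grass [:: (fset0, 1)].
Definition gadd (x y : grass) : grass := Grass (gterms x ++ gterms y).
Definition gscale (c : F) (x : grass) : grass :=
  Grass [seq (p.1, c * p.2) | p <- gterms x].
(* bilinear extension of e_S e_T = 0 if S,T meet, sign(S,T) e_{S u T} otherwise *)
Definition gmul (x y : grass) : grass :=
  Grass [seq (p.1 `|` q.1,
              if fdisjoint p.1 q.1 then gsign p.1 q.1 * p.2 * q.2 else 0)
        | p : gmon * F <- gterms x, q : gmon * F <- gterms y].

Definition homog (deg : nat -> nat) (d : nat) (x : grass) : Prop :=
  forall S, gcoef x S != 0 -> (\sum_(i <- enum_fset S) deg i)%N = d.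

(* E^infty : ||e_i|| = 1 for i odd, 0 for i even (paper indexing, i >= 1). *)
Definition deg_inf (i : nat) : nat := if odd i.+1 then 1%N else 0%N.
(* E^{k*} : ||e_i|| = 1 for 1 <= i <= k, 0 otherwise (paper indexing). *)
Definition deg_kstar (k : nat) (i : nat) : nat := if (i.+1 <= k)%N then 1%N else 0%N.

(* Polynomials of the free algebra on variables of type X, given by their
   coefficient function on words (monomials). *)
Definition fpoly (X : Type) := seq X -> F.

Definition gword (X : Type) (s : X -> grass) (w : seq X) : grass :=
  foldr (fun x acc => gmul (s x) acc) gone w.

Definition multilin (X : eqType) (vs : seq X) (f : fpoly X) : Prop :=
  forall w, f w != 0 -> perm_eq w vs.

Definition evalp (X : eqType) (vs : seq X) (f : fpoly X) (s : X -> grass) : grass :=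
  foldr gadd (Grass [::]) [seq gscale (f w) (gword s w) | w <- permutations vs].

(* Ordinary variables x_1, x_2, ... are nats (x_i |-> i). *)
Definition Vn_vars (n : nat) : seq nat := iota 1 n.
Definition inVn (n : nat) (f : fpoly nat) : Prop := multilin (Vn_vars n) f.
Definition isTE (n : nat) (f : fpoly nat) : Prop :=
  forall s : nat -> grass, gzero (evalp (Vn_vars n) f s).

(* Graded variables: (d, j) is x^d_j for d >= 1, and z_j for d = 0;
   the Z-degree alpha of (d, j) is d. *)
Definition gvar := (nat * nat)%type.
Definition alpha (x : gvar) : nat := x.1.

(* variables z_1..z_m, x^1_1..x^1_{l_1}, ..., x^t_1..x^t_{l_t} with l = [l_1;..;l_t] *)
Definition Vml_vars (m : nat) (l : seq nat) : seq gvar :=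
  [seq (0%N, j) | j <- iota 1 m] ++
  flatten [seq [seq (d.+1, j) | j <- iota 1 (nth 0%N l d)] | d <- iota 0 (size l)].
Definition inVml (m : nat) (l : seq nat) (g : fpoly gvar) : Prop :=
  multilin (Vml_vars m l) g.
Definition isTZ (deg : nat -> nat) (m : nat) (l : seq nat) (g : fpoly gvar) : Prop :=
  forall s : gvar -> grass, (forall x, homog deg (alpha x) (s x)) ->
    gzero (evalp (Vml_vars m l) g s).

Fixpoint psi_aux (l : seq nat) (d i : nat) : gvar :=
  match l with
  | [::] => (0%N, i)
  | a :: l' => if (i <= a)%N then (d, i) else psi_aux l' d.+1 (i - a)
  end.
Definition psi_var (l : seq nat) (i : nat) : gvar := psi_aux l 1 i.

Definition psi (l : seq nat) (n : nat) (f : fpoly nat) : fpoly gvar :=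
  fun w => \sum_(u <- permutations (Vn_vars n) | map (psi_var l) u == w) f u.

End Grassmann.

From HB Require Import structures.
From mathcomp Require Import all_boot all_order all_algebra.
From mathcomp Require Import finmap ring zify.
From Stdlib Require Import Setoid Morphisms FunctionalExtensionality.
Import Order.TTheory GRing.Theory Num.Theory.
Set Implicit Arguments. Unset Strict Implicit. Unset Printing Implicit Defensive.

(* A graded substitution is in particular an ordinary one, so psi maps
   identities of E to graded identities.  Conversely, let g be a graded
   identity and s an ordinary substitution.  Rename the generators occurring
   in s by an order-preserving map h into generators of degree 0, and attach
   to each variable x_i a monomial e_(U_i), where the U_i are pairwise
   disjoint sets of even size avoiding the image of h, and e_(U_i) has the
   degree of psi(x_i).  Then x_i |-> h(s(x_i)) e_(U_i) is a graded
   substitution, and since even monomials are central, the value of a word u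
   under it is h(u(s)) times c e_U, where U = U_1 u ... u U_n and c is a
   nonzero scalar independent of u.  Comparing the coefficients of
   e_(h(A) u U) shows that psi^-1(g) vanishes under s.  This needs
   1 l_1 + ... + t l_t generators of degree 1: E^infty has infinitely many,
   E^{k*} has k. *)

Section BigFset.
Variables (R : Type) (idx : R) (op : Monoid.com_law idx) (I : choiceType).

Lemma big_fsetU_disjoint (G : I -> R) (A B : {fset I}) : fdisjoint A B ->
  \big[op/idx]_(s <- (A `|` B)%fset) G s =
  op (\big[op/idx]_(s <- A) G s) (\big[op/idx]_(s <- B) G s).
Proof.
move=> dAB; rewrite -big_cat; apply/perm_big/uniq_perm => [||x].
- exact: fset_uniq.
- rewrite cat_uniq !fset_uniq /= andbT; apply/hasPn => x xB /=.
  by apply: contraTN xB => /(fdisjointP dAB).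
- by rewrite mem_cat in_fsetU.
Qed.

Lemma big_fset_seq (s : seq I) (G : I -> R) :
  uniq s -> \big[op/idx]_(j <- [fset x in s]%fset) G j = \big[op/idx]_(j <- s) G j.
Proof.
by move=> us; apply/perm_big/uniq_perm => [||x]; rewrite ?fset_uniq ?in_fset.
Qed.

End BigFset.

Section GrassmannAlgebra.
Variable F : fieldType.
Local Notation grass := (grass F).
Implicit Types (x y : grass) (A B S : {fset nat}).
Local Open Scope fset_scope.
Local Open Scope ring_scope.

Lemma gcoef_add x y S : gcoef (gadd x y) S = gcoef x S + gcoef y S.
Proof. by rewrite /gcoef big_cat. Qed.

Lemma gcoef_scale c x S : gcoef (gscale c x) S = c * gcoef x S.
Proof.
rewrite /gcoef big_map mulr_sumr; apply: eq_bigr => p _ /=.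
by case: ifP; rewrite ?mulr0.
Qed.

Lemma gcoef_nil S : gcoef (Grass [::]) S = 0 :> F.
Proof. by rewrite /gcoef big_nil. Qed.

Lemma gcoef_evalp (X : eqType) (vs : seq X) (f : fpoly F X) s S :
  gcoef (evalp vs f s) S = \sum_(w <- permutations vs) f w * gcoef (gword s w) S.
Proof.
rewrite /evalp; elim: (permutations vs) => [|w ws IH] /=.
  by rewrite big_nil gcoef_nil.
by rewrite gcoef_add gcoef_scale IH big_cons.
Qed.

Lemma sum_gterms x (H : {fset nat} -> F) (D : seq {fset nat}) :
  uniq D -> {subset [seq p.1 | p <- gterms x] <= D} ->
  \sum_(p <- gterms x) p.2 * H p.1 = \sum_(A <- D) gcoef x A * H A.
Proof.
move=> uD xD; rewrite /gcoef; under [RHS]eq_bigr do rewrite mulr_suml.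
rewrite exchange_big /=; apply: eq_big_seq => p px.
rewrite (bigD1_seq p.1) ?xD ?map_f //= eqxx big1 ?addr0 // => A.
by rewrite eq_sym => /negbTE ->; rewrite mul0r.
Qed.

Definition gmulc A B S : F :=
  if (A `|` B == S) && fdisjoint A B then gsign F A B else 0.

Lemma gcoef_mul x y S : gcoef (gmul x y) S =
  \sum_(p <- gterms x) \sum_(q <- gterms y) p.2 * q.2 * gmulc p.1 q.1 S.
Proof.
rewrite /gcoef /gmul /= big_allpairs_dep; apply: eq_bigr => p _; apply: eq_bigr => q _.
rewrite /gmulc /=; case: (_ == S); rewrite ?mulr0 //=.
by case: ifP => _; [ring | rewrite mulr0].
Qed.

Lemma gcoef_mul_supp x y Dx Dy S : uniq Dx -> uniq Dy ->
  {subset [seq p.1 | p <- gterms x] <= Dx} -> {subset [seq q.1 | q <- gterms y] <= Dy} ->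
  gcoef (gmul x y) S =
  \sum_(A <- Dx) \sum_(B <- Dy) gcoef x A * gcoef y B * gmulc A B S.
Proof.
move=> uDx uDy xD yD; rewrite gcoef_mul.
under eq_bigr do under eq_bigr do rewrite -mulrA.
under eq_bigr do rewrite -mulr_sumr (sum_gterms (fun B => gmulc _ B S) uDy yD).
rewrite (sum_gterms (fun A => \sum_(B <- Dy) gcoef y B * gmulc A B S) uDx xD).
by apply: eq_bigr => A _; rewrite mulr_sumr; under eq_bigr do rewrite mulrA.
Qed.

End GrassmannAlgebra.

Definition geqv (F : fieldType) (x y : grass F) := forall S, gcoef x S = gcoef y S.

#[export] Instance geqv_equiv (F : fieldType) : Equivalence (@geqv F).
Proof. by split=> [x|x y xy|x y z xy yz] S; rewrite ?xy ?yz. Qed.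

#[export] Instance gmul_proper (F : fieldType) :
  Proper (@geqv F ==> @geqv F ==> @geqv F) (@gmul F).
Proof.
move=> x x' xx' y y' yy' S.
pose supp (z z' : grass F) := undup [seq p.1 | p <- gterms (gadd z z')].
have supp_uniq z z' : uniq (supp z z') by apply: undup_uniq.
have suppl z z' : {subset [seq p.1 | p <- gterms z] <= supp z z'}.
  by move=> A; rewrite mem_undup /= map_cat mem_cat => ->.
have suppr z z' : {subset [seq p.1 | p <- gterms z'] <= supp z z'}.
  by move=> A; rewrite mem_undup /= map_cat mem_cat orbC => ->.
rewrite (gcoef_mul_supp S (supp_uniq x x') (supp_uniq y y') (suppl _ _) (suppl _ _)).
rewrite (gcoef_mul_supp S (supp_uniq x x') (supp_uniq y y') (suppr _ _) (suppr _ _)).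
by apply: eq_bigr => A _; apply: eq_bigr => B _; rewrite xx' yy'.
Qed.

#[export] Instance gcoef_proper (F : fieldType) :
  Proper (@geqv F ==> eq ==> eq) (@gcoef F).
Proof. by move=> x y xy S _ <-. Qed.

Section GrassmannProduct.
Variable F : fieldType.
Local Notation grass := (grass F).
Implicit Types (x y z : grass) (A B C U : {fset nat}).
Local Open Scope fset_scope.
Local Open Scope ring_scope.

Definition ninv A B := (\sum_(s <- A) \sum_(t <- B) (t < s))%N.

Lemma gsignE A B : gsign F A B = (-1) ^+ ninv A B. Proof. by []. Qed.

Lemma gsignUl A B C : fdisjoint A B -> gsign F (A `|` B) C = gsign F A C * gsign F B C.
Proof. by move=> dAB; rewrite !gsignE -exprD /ninv big_fsetU_disjoint. Qed.

Lemma gsignUr A B C : fdisjoint B C -> gsign F A (B `|` C) = gsign F A B * gsign F A C.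
Proof.
move=> dBC; rewrite !gsignE -exprD /ninv -big_split.
by under eq_bigr do rewrite big_fsetU_disjoint //.
Qed.

Lemma gsign0l B : gsign F fset0 B = 1.
Proof. by rewrite gsignE /ninv big_seq_fset0. Qed.

Lemma ninvC A B : fdisjoint A B -> (ninv A B + ninv B A = #|` A| * #|` B|)%N.
Proof.
move=> dAB; rewrite /ninv [X in (_ + X)%N]exchange_big -big_split /=.
rewrite card_fset_sum1 big_distrl /=; apply: eq_big_seq => s sA.
rewrite -big_split card_fset_sum1 mul1n; apply: eq_big_seq => t tB /=.
have : s != t by apply: contraTneq tB => <-; apply: (fdisjointP dAB).
by case: ltngtP.
Qed.

Lemma gsignC A U : fdisjoint A U -> ~~ odd #|` U| -> gsign F A U = gsign F U A.
Proof.
move=> dAU evU; rewrite !gsignE -signr_odd -[RHS]signr_odd; congr (_ ^+ _).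
have := congr1 odd (ninvC dAU); rewrite oddD oddM (negbTE evU) andbF.
by case: odd; case: odd.
Qed.

Lemma gmulA x y z : geqv (gmul x (gmul y z)) (gmul (gmul x y) z).
Proof.
move=> S; rewrite !gcoef_mul /= big_allpairs_dep /=; apply: eq_bigr => p _.
rewrite big_allpairs_dep /=; apply: eq_bigr => q _; apply: eq_bigr => r _.
rewrite /gmulc fdisjointUX fdisjointXU fsetUA.
case: eqP => _; rewrite ?andbF ?mulr0 //.
case dpq: (fdisjoint p.1 q.1); case dpr: (fdisjoint p.1 r.1);
  case dqr: (fdisjoint q.1 r.1); rewrite /= ?mulr0 ?mul0r //.
rewrite gsignUl // gsignUr //; ring.
Qed.

Lemma gmul1 x : geqv (gmul (gone F) x) x.
Proof.
move=> S; rewrite gcoef_mul big_seq1 /gcoef; apply: eq_bigr => q _.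
rewrite /gmulc /= fset0U fdisjoint0X gsign0l andbT mul1r.
by case: eqP; rewrite ?mulr0 ?mulr1.
Qed.

Definition gsing A (c : F) : grass := Grass [:: (A, c)].

Lemma gsing_even_central x U : ~~ odd #|` U| ->
  geqv (gmul x (gsing U 1)) (gmul (gsing U 1) x).
Proof.
move=> evU S; rewrite !gcoef_mul big_seq1; apply: eq_bigr => p _; rewrite big_seq1 /=.
rewrite /gmulc fsetUC fdisjoint_sym; case: andP => [[_ dUp]|_]; last by rewrite !mulr0.
by rewrite fdisjoint_sym in dUp; rewrite (gsignC dUp evU); ring.
Qed.

End GrassmannProduct.

Section Renaming.
Variables (F : fieldType) (h : nat -> nat).
Hypothesis h_mono : {mono h : a b / (a <= b)%N}.
Implicit Types (x y : grass F) (A B T : {fset nat}).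
Local Open Scope fset_scope.
Local Open Scope ring_scope.

Let h_inj : injective h := mono_inj leqnn anti_leq h_mono.

Definition grename x : grass F := Grass [seq (h @` p.1, p.2) | p <- gterms x].

Lemma fdisjoint_imfset A B : fdisjoint (h @` A) (h @` B) = fdisjoint A B.
Proof.
apply/fdisjointP/fdisjointP => hAB a.
  by move=> aA; have := hAB (h a); rewrite !(mem_imfset _ _ h_inj); apply.
by case/imfsetP=> b bA ->; rewrite (mem_imfset _ _ h_inj); apply: hAB.
Qed.

Lemma gsign_imfset A B : gsign F (h @` A) (h @` B) = gsign F A B.
Proof.
rewrite !gsignE /ninv big_imfset /=; last by move=> ? ? _ _ /h_inj.
congr (_ ^+ _); apply: eq_bigr => s _; rewrite big_imfset /=; last by move=> ? ? _ _ /h_inj.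
by apply: eq_bigr => t _; rewrite (leqW_mono h_mono).
Qed.

Lemma grename_mul x y : grename (gmul x y) = gmul (grename x) (grename y).
Proof.
rewrite /grename /gmul /=; congr Grass.
rewrite map_allpairs allpairs_mapl allpairs_mapr; apply: eq_allpairs => p q /=.
by rewrite imfsetU fdisjoint_imfset gsign_imfset.
Qed.

Lemma grename_one : grename (gone F) = gone F.
Proof. by rewrite /grename /= imfset0. Qed.

Lemma gword_rename (X : Type) (s : X -> grass F) w :
  gword (grename \o s) w = grename (gword s w).
Proof. by elim: w => [|a w IH] /=; rewrite ?grename_one // IH grename_mul. Qed.

Section AvoidingImage.
Variable T : {fset nat}.
Hypothesis T_avoid : forall j, h j \notin T.

Lemma fdisjoint_imfset_avoid A : fdisjoint (h @` A) T.
Proof. by apply/fdisjointP => a /imfsetP[b _ ->]. Qed.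

Lemma imfsetU_avoid_inj : injective (fun A => h @` A `|` T).
Proof.
have sub A B : h @` A `|` T = h @` B `|` T -> {subset A <= B}.
  move=> eAB a aA; have : h a \in h @` B `|` T.
    by rewrite -eAB in_fsetU (mem_imfset _ _ h_inj) aA.
  by rewrite in_fsetU (negbTE (T_avoid a)) orbF (mem_imfset _ _ h_inj).
by move=> A B eAB; apply/fsetP => a; apply/idP/idP; apply: sub.
Qed.

Lemma gcoef_mul_rename_sing x c A :
  gcoef (gmul (grename x) (gsing T c)) (h @` A `|` T) =
  gcoef x A * (gsign F (h @` A) T * c).
Proof.
rewrite gcoef_mul big_map /gcoef mulr_suml; apply: eq_bigr => p _.
rewrite big_seq1 /gmulc /= (inj_eq imfsetU_avoid_inj) fdisjoint_imfset_avoid andbT.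
by case: eqP => [->|_]; rewrite ?mulr0 ?mul0r //; ring.
Qed.

End AvoidingImage.
End Renaming.

Section Words.
Variable F : fieldType.
Implicit Types (x : grass F).

Lemma gword_eq_in (X : eqType) (s s' : X -> grass F) w :
  {in w, s =1 s'} -> gword s w = gword s' w.
Proof.
elim: w => [|a w IH] //= ss'; rewrite ss' ?mem_head // IH // => i iw.
by rewrite ss' // in_cons iw orbT.
Qed.

Lemma gword_map (X Y : Type) (s : Y -> grass F) (f : X -> Y) w :
  gword s (map f w) = gword (s \o f) w.
Proof. by elim: w => [|a w IH] //=; rewrite IH. Qed.

Section CentralFactors.
Variables (X : eqType) (E : X -> grass F).
Hypothesis E_central : forall i x, geqv (gmul x (E i)) (gmul (E i) x).

Lemma gword_rem a w : a \in w -> geqv (gword E w) (gmul (E a) (gword E (rem a w))).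
Proof.
elim: w => [|b w IH] //; rewrite in_cons /=.
have [->|ab] := eqVneq a b; first by move=> _; reflexivity.
by move=> /= /IH ->; rewrite !gmulA (E_central a (E b)).
Qed.

Lemma gword_perm w w' : perm_eq w w' -> geqv (gword E w) (gword E w').
Proof.
elim: w w' => [|a w IH] w' ww'.
  by rewrite perm_sym in ww'; rewrite (perm_nilP ww').
have aw' : a \in w' by rewrite -(perm_mem ww') mem_head.
rewrite (gword_rem aw') /= (IH (rem a w')) //.
by rewrite -(perm_cons a) (perm_trans ww') // perm_to_rem.
Qed.

Lemma gword_mul (t : X -> grass F) w :
  geqv (gword (fun i => gmul (t i) (E i)) w) (gmul (gword t w) (gword E w)).
Proof.
elim: w => [|a w IH] /=; first by rewrite gmul1.
rewrite IH -!gmulA; apply: gmul_proper => //.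
by rewrite !gmulA (E_central a (gword t w)).
Qed.

End CentralFactors.
End Words.

Definition graded_xvars (l : seq nat) (d : nat) : seq gvar :=
  flatten [seq [seq (d + k, j) | j <- iota 1 (nth 0 l k)] | k <- iota 0 (size l)].

Lemma map_psi_aux l m d :
  map (psi_aux l d) (iota 1 (sumn l + m)) =
  graded_xvars l d ++ [seq (0, j) | j <- iota 1 m].
Proof.
elim: l d => [|a l IH] d /=; first by rewrite add0n.
rewrite -addnA iotaD map_cat addnC iotaDl -map_comp.
have -> : map (psi_aux (a :: l) d) (iota 1 a) = [seq (d + 0, j) | j <- iota 1 a].
  by apply/eq_in_map => i; rewrite mem_iota addn0 /= ltnS => /andP[_ ->].
have -> : map (psi_aux (a :: l) d \o addn a) (iota 1 (sumn l + m)) =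
          map (psi_aux l d.+1) (iota 1 (sumn l + m)).
  apply/eq_in_map => i; rewrite mem_iota /= => /andP[i1 _].
  by rewrite ifF ?addKn //; lia.
rewrite IH /graded_xvars /= catA (iotaDl 1 0 (size l)) -map_comp.
by congr ((_ ++ flatten _) ++ _); apply: eq_map => k /=; rewrite addSnnS.
Qed.

Lemma perm_map_psi_var l m :
  perm_eq (map (psi_var l) (Vn_vars (sumn l + m))) (Vml_vars m l).
Proof. by rewrite /psi_var map_psi_aux perm_catC. Qed.

Definition psi_aux_inv (l : seq nat) (d : nat) (x : gvar) : nat :=
  if x.1 == 0 then sumn l + x.2 else sumn (take (x.1 - d) l) + x.2.

Lemma psi_aux_fst l d i : (psi_aux l d i).1 != 0 -> d <= (psi_aux l d i).1.
Proof.
elim: l d i => [|a l IH] d i //=; case: ifP => // _ /IH; exact: ltnW.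
Qed.

Lemma psi_auxK l d i : 0 < d -> 0 < i -> psi_aux_inv l d (psi_aux l d i) = i.
Proof.
elim: l d i => [|a l IH] d i d0 i0 /=; first by rewrite /psi_aux_inv /= add0n.
case: ifP => ia; first by rewrite /psi_aux_inv /= gtn_eqF // subnn.
have ia0 : 0 < i - a by lia.
move: (IH d.+1 (i - a) isT ia0) (@psi_aux_fst l d.+1 (i - a)).
rewrite /psi_aux_inv; set r := psi_aux l d.+1 (i - a).
case: eqP => [_ /= ri _ | _ ri /(_ isT) dr]; first by lia.
by rewrite (_ : r.1 - d = (r.1 - d.+1).+1) /=; lia.
Qed.

Lemma Vn_vars_gt0 n i : i \in Vn_vars n -> 0 < i.
Proof. by rewrite mem_iota => /andP[]. Qed.

Section PsiBijection.
Variables (F : fieldType) (m : nat) (l : seq nat).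
Local Notation n := (sumn l + m).
Local Notation vs := (Vn_vars n).
Local Notation vm := (Vml_vars m l).
Local Notation psv := (psi_var l).
Local Open Scope ring_scope.

Definition psi_var_inv : gvar -> nat := psi_aux_inv l 1.

Lemma psi_varK : {in vs, cancel psv psi_var_inv}.
Proof. by move=> i /Vn_vars_gt0; apply: psi_auxK. Qed.

Lemma perm_psi_map u : perm_eq u vs -> perm_eq (map psv u) vm.
Proof. by move=> uvs; apply: perm_trans (perm_map psv uvs) (perm_map_psi_var l m). Qed.

Lemma psi_var_invK : {in vm, cancel psi_var_inv psv}.
Proof.
move=> x; rewrite -(perm_mem (perm_map_psi_var l m)) => /mapP[i ivs ->].
by rewrite psi_varK.
Qed.

Lemma sum_psi (f : fpoly F nat) (c : seq gvar -> F) :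
  \sum_(w <- permutations vm) psi l n f w * c w =
  \sum_(u <- permutations vs) f u * c (map psv u).
Proof.
rewrite /psi; under eq_bigr do rewrite big_distrl /= big_mkcond.
rewrite exchange_big; apply: eq_big_seq => u; rewrite mem_permutations => uvs.
rewrite -big_mkcond (eq_bigl (pred1 (map psv u))); last by move=> w; rewrite eq_sym.
rewrite -big_filter filter_pred1_uniq ?permutations_uniq ?big_seq1 //.
by rewrite mem_permutations perm_psi_map.
Qed.

Lemma gcoef_evalp_psi (f : fpoly F nat) s S :
  gcoef (evalp vm (psi l n f) s) S = gcoef (evalp vs f (s \o psv)) S.
Proof. by rewrite !gcoef_evalp sum_psi; under eq_bigr do rewrite gword_map. Qed.

Lemma psi_multilin (f : fpoly F nat) : inVml m l (psi l n f).
Proof.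
move=> w; apply: contraR => wvm; apply/eqP/big1_seq => u /andP[/eqP uw].
by rewrite mem_permutations => /perm_psi_map; rewrite uw (negbTE wvm).
Qed.

Lemma psi_isTZ deg (f : fpoly F nat) : isTE n f -> isTZ deg m l (psi l n f).
Proof. by move=> fTE s _ S; rewrite gcoef_evalp_psi; apply: fTE. Qed.

Definition psi_pullback (g : fpoly F gvar) : fpoly F nat :=
  fun u => if perm_eq u vs then g (map psv u) else 0.

Lemma psi_pullback_multilin g : inVn n (psi_pullback g).
Proof. by move=> u; rewrite /psi_pullback; case: ifP => // _; rewrite eqxx. Qed.

Lemma psi_pullbackK g : inVml m l g -> psi l n (psi_pullback g) = g.
Proof.
move=> gV; apply: functional_extensionality => w; rewrite /psi.
have [wvm|wvm] := boolP (perm_eq w vm); last first.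
  rewrite big1_seq => [|u /andP[/eqP uw]]; last first.
    by rewrite mem_permutations => /perm_psi_map; rewrite uw (negbTE wvm).
  by apply/esym/eqP; apply: contraR wvm; apply: gV.
pose u0 := map psi_var_inv w.
have wK : map psv u0 = w.
  by rewrite -map_comp map_id_in // => x; rewrite (perm_mem wvm); apply: psi_var_invK.
have u0vs : perm_eq u0 vs.
  have vm_vs : perm_eq vm (map psv vs) by rewrite perm_sym perm_map_psi_var.
  have := perm_map psi_var_inv (perm_trans wvm vm_vs).
  by rewrite -map_comp map_id_in //; apply: psi_varK.
have psv_eq : {in permutations vs, forall u, (map psv u == w) = (u == u0)}.
  move=> u; rewrite mem_permutations => uvs; apply/eqP/eqP => [uw|->] //.
  by rewrite /u0 -uw -map_comp map_id_in // => i; rewrite (perm_mem uvs); apply: psi_varK.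
rewrite -big_filter (eq_in_filter psv_eq) filter_pred1_uniq ?permutations_uniq //.
  by rewrite big_seq1 /psi_pullback u0vs wK.
by rewrite mem_permutations.
Qed.

End PsiBijection.

Section GradedPullback.
Variables (F : fieldType) (m : nat) (l : seq nat) (deg h : nat -> nat).
Variable U : nat -> {fset nat}.
Local Notation n := (sumn l + m).
Local Notation vs := (Vn_vars n).
Local Notation vm := (Vml_vars m l).
Local Notation psv := (psi_var l).
Local Notation E i := (gsing (U i) (1 : F)).
Local Open Scope fset_scope.
Local Open Scope ring_scope.

Hypothesis h_mono : {mono h : a b / (a <= b)%N}.
Hypothesis deg_h : forall j, deg (h j) = 0%N.
Hypothesis U_even : forall i, ~~ odd #|` U i|.
Hypothesis U_avoid : forall i j, h j \notin U i.
Hypothesis U_disjoint : {in vs &, forall i j, i != j -> fdisjoint (U i) (U j)}.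
Hypothesis U_deg : {in vs, forall i, (\sum_(j <- U i) deg j)%N = (psv i).1}.

Let h_inj : injective h := mono_inj leqnn anti_leq h_mono.

Lemma bigcup_U_avoid w j : h j \notin \bigcup_(i <- w) U i.
Proof. by apply/bigfcupP => -[i _]; apply/negP/U_avoid. Qed.

Lemma gword_sing w : uniq w -> {subset w <= vs} ->
  exists2 c, c != 0 & gword (fun i => E i) w = gsing (\bigcup_(i <- w) U i) c.
Proof.
elim: w => [|a w IH] /=; first by exists 1; rewrite ?oner_eq0 ?big_nil.
case/andP=> aw uw /allP/=/andP[avs /allP wvs].
have [c c0 ->] := IH uw wvs.
have dU : fdisjoint (U a) (\bigcup_(i <- w) U i).
  apply/fdisjointP => x xa; apply/bigfcupP => -[i /andP[iw _] xi].
  have ai : a != i by apply: contraNneq aw => ->.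
  by move/fdisjointP: (U_disjoint avs (wvs i iw) ai) => /(_ x xa); rewrite xi.
exists (gsign F (U a) (\bigcup_(i <- w) U i) * 1 * c).
  by rewrite mulr1 mulf_neq0 // gsignE signr_eq0.
by rewrite /gmul /gsing /= dU big_cons.
Qed.

Definition lift_subst (s : nat -> grass F) (x : gvar) : grass F :=
  if x \in vm then gmul (grename h (s (psi_var_inv l x))) (E (psi_var_inv l x))
  else Grass [::].

Lemma lift_subst_psi s i : i \in vs ->
  lift_subst s (psv i) = gmul (grename h (s i)) (E i).
Proof.
move=> ivs; rewrite /lift_subst (psi_varK ivs) ifT //.
by rewrite -(perm_mem (perm_map_psi_var l m)) map_f.
Qed.

Lemma homog_lift_subst s x : homog deg (alpha x) (lift_subst s x).
Proof.
move=> S; have [xvm|xvm] := boolP (x \in vm); last first.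
  by rewrite /lift_subst ifN // gcoef_nil eqxx.
move: xvm; rewrite -(perm_mem (perm_map_psi_var l m)) => /mapP[i ivs ->].
rewrite lift_subst_psi //; apply: contraNeq => Sdeg; apply/eqP.
rewrite gcoef_mul big_map big1 // => p _; rewrite big_seq1 /gmulc /=.
case: andP => [[/eqP eS _]|_]; last by rewrite mulr0.
suff : (\sum_(j <- S) deg j)%N = alpha (psv i) by move/eqP; rewrite (negbTE Sdeg).
rewrite /alpha -eS big_fsetU_disjoint ?fdisjoint_imfset_avoid //.
rewrite big_imfset /=; last by move=> a b _ _ /h_inj.
by rewrite big1 ?add0n ?U_deg // => j _; apply: deg_h.
Qed.

Lemma isTZ_psi_pullback (g : fpoly F gvar) :
  inVml m l g -> isTZ deg m l g -> isTE n (psi_pullback m l g).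
Proof.
move=> gV gTZ s A.
have E_central i x : geqv (gmul x (E i)) (gmul (E i) x) := gsing_even_central x (U_even i).
have [c c0 Evs] := gword_sing (iota_uniq 1 n) (fun i => id).
set T := \bigcup_(i <- vs) U i in Evs.
have key u : u \in permutations vs ->
    gcoef (gword (lift_subst s \o psv) u) (h @` A `|` T) =
    gcoef (gword s u) A * (gsign F (h @` A) T * c).
  rewrite mem_permutations => uvs.
  rewrite (@gword_eq_in _ _ _ (fun i => gmul (grename h (s i)) (E i))); last first.
    by move=> i; rewrite (perm_mem uvs) => ivs; apply: lift_subst_psi.
  rewrite (gword_mul E_central) (gword_perm E_central uvs) Evs (gword_rename h_mono).
  by rewrite gcoef_mul_rename_sing //; apply: bigcup_U_avoid.
have := gTZ (lift_subst s) (@homog_lift_subst s) (h @` A `|` T).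
rewrite -{1}(psi_pullbackK gV) gcoef_evalp_psi gcoef_evalp.
under eq_big_seq => u uvs do rewrite key // mulrA.
rewrite -mulr_suml -gcoef_evalp => /eqP; rewrite mulf_eq0 => /orP[/eqP //|].
by rewrite mulf_eq0 (negbTE c0) orbF gsignE signr_eq0.
Qed.

End GradedPullback.

Section Blocks.
Variables (m : nat) (l : seq nat) (deg G P : nat -> nat).
Local Notation n := (sumn l + m).
Local Notation vs := (Vn_vars n).
Local Notation dg i := (psi_var l i).1.
Local Notation N := (\sum_(1 <= i < n.+1) dg i)%N.
Local Open Scope fset_scope.

Hypothesis G_inj : {in [pred x | (x < N)%N] &, injective G}.
Hypothesis P_inj : injective P.
Hypothesis G_neq_P : forall x y, (x < N)%N -> G x != P y.
Hypothesis deg_G : forall x, (x < N)%N -> deg (G x) = 1%N.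
Hypothesis deg_P : forall x, deg (P x) = 0%N.

Definition block_offset i := (\sum_(1 <= j < i) dg j)%N.
Definition block_slots i := if i \in vs then iota (block_offset i) (dg i) else [::].
Definition block_seq i := map G (block_slots i) ++ map P (block_slots i).
Definition block i := [fset x in block_seq i].

Lemma block_offset_le i j : (0 < i < j)%N -> (block_offset i + dg i <= block_offset j)%N.
Proof.
case/andP=> i0 ij; rewrite /block_offset (big_cat_nat i0 (ltnW ij)) (big_ltn ij) /=; lia.
Qed.

Lemma block_slots_lt i r : r \in block_slots i -> (r < N)%N.
Proof.
rewrite /block_slots; case: ifP => //; rewrite !mem_iota => /andP[i0 iN] /andP[_ r_lt].
by apply/(leq_trans r_lt)/block_offset_le; rewrite i0.
Qed.

Lemma block_seq_uniq i : uniq (block_seq i).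
Proof.
have slots_uniq : uniq (block_slots i).
  by rewrite /block_slots; case: ifP => // _; apply: iota_uniq.
have G_inj_slots : {in block_slots i &, injective G}.
  by move=> x y /block_slots_lt xN /block_slots_lt yN; apply: G_inj.
rewrite cat_uniq (map_inj_in_uniq G_inj_slots).
rewrite map_inj_uniq // slots_uniq andbT /=; apply/hasPn => _ /mapP[y _ ->].
apply/mapP => -[x /block_slots_lt xN /eqP]; by rewrite eq_sym (negbTE (G_neq_P y xN)).
Qed.

Lemma block_even i : ~~ odd #|` block i|.
Proof.
by rewrite card_fseq undup_id ?block_seq_uniq // size_cat !size_map addnn odd_double.
Qed.

Lemma mem_block i x : x \in block i -> exists2 r, r \in block_slots i & x = G r \/ x = P r.
Proof.
by rewrite in_fset mem_cat => /orP[]/mapP[r rs ->]; exists r => //; [left | right].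
Qed.

Lemma block_disjoint : {in vs &, forall i j, i != j -> fdisjoint (block i) (block j)}.
Proof.
have lt_disj i j : i \in vs -> j \in vs -> (i < j)%N -> fdisjoint (block i) (block j).
  move=> ivs jvs ij; apply/fdisjointP => x /mem_block[r ri xr].
  apply/negP => /mem_block[r' rj xr'].
  have rr' : (r < r')%N.
    move: ri rj; rewrite /block_slots ivs jvs !mem_iota.
    by have := @block_offset_le i j; rewrite (Vn_vars_gt0 ivs) ij; lia.
  have [rN r'N] := (block_slots_lt ri, block_slots_lt rj).
  case: xr xr' => -> [] /eqP; rewrite ?(inj_eq P_inj) ?(ltn_eqF rr') //.
  - by rewrite (inj_in_eq G_inj) ?(ltn_eqF rr').
  - by rewrite (negbTE (G_neq_P _ rN)).
  - by rewrite eq_sym (negbTE (G_neq_P _ r'N)).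
move=> i j ivs jvs; case: ltngtP => // [ij|ji] _; first exact: lt_disj.
by rewrite fdisjoint_sym; apply: lt_disj.
Qed.

Lemma block_deg : {in vs, forall i, (\sum_(x <- block i) deg x)%N = dg i}.
Proof.
move=> i ivs; rewrite big_fset_seq ?block_seq_uniq // big_cat !big_map /=.
rewrite [X in (_ + X)%N]big1 // addn0 (eq_big_seq (fun=> 1%N)).
  by rewrite sum1_size /block_slots ivs size_iota.
by move=> r /block_slots_lt; apply: deg_G.
Qed.

Lemma block_avoid (h : nat -> nat) :
  (forall j x, (x < N)%N -> (h j != G x) && (h j != P x)) ->
  forall i j, h j \notin block i.
Proof.
move=> hGP i j; apply/negP => /mem_block[r /block_slots_lt rN [] /eqP].
  by case/andP: (hGP j r rN) => /negbTE ->.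
by case/andP: (hGP j r rN) => _ /negbTE ->.
Qed.

End Blocks.

(* The generators used in the converse direction: [rename_gen] is the
   order-preserving renaming h, while [deg1_gen] and [pad_gen] fill the sets
   U_i with degree-1 generators and with degree-0 generators making them
   even; only the first N degree-1 generators are ever used. *)
Record grading_supply (deg : nat -> nat) (N : nat) := GradingSupply {
  rename_gen : nat -> nat;
  deg1_gen : nat -> nat;
  pad_gen : nat -> nat;
  rename_gen_mono : {mono rename_gen : a b / (a <= b)%N};
  deg_rename_gen : forall j, deg (rename_gen j) = 0%N;
  deg1_gen_inj : {in [pred x | (x < N)%N] &, injective deg1_gen};
  pad_gen_inj : injective pad_gen;
  deg1_gen_neq_pad : forall x y, (x < N)%N -> deg1_gen x != pad_gen y;
  deg_deg1_gen : forall x, (x < N)%N -> deg (deg1_gen x) = 1%N;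
  deg_pad_gen : forall x, deg (pad_gen x) = 0%N;
  rename_gen_fresh : forall j x, (x < N)%N ->
    (rename_gen j != deg1_gen x) && (rename_gen j != pad_gen x)
}.

Lemma psi_image_isTZ (F : fieldType) m l deg :
  grading_supply deg (\sum_(1 <= i < (sumn l + m).+1) (psi_var l i).1) ->
  forall g : fpoly F gvar, (inVml m l g /\ isTZ deg m l g) <->
    (exists f, [/\ inVn (sumn l + m) f, isTE (sumn l + m) f & psi l (sumn l + m) f = g]).
Proof.
case=> h G P h_mono deg_h G_inj P_inj GP deg_G deg_P h_fresh g.
split=> [[gV gTZ]|[f [_ fTE <-]]]; last by split; [exact: psi_multilin | exact: psi_isTZ].
exists (psi_pullback m l g); split; [exact: psi_pullback_multilin | | exact: psi_pullbackK].
apply: (isTZ_psi_pullback (U := block m l G P) h_mono deg_h) gV gTZ.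
- exact: block_even.
- exact: block_avoid.
- exact: block_disjoint.
- exact: block_deg.
Qed.

Lemma total_psi_deg m l :
  (\sum_(1 <= i < (sumn l + m).+1) (psi_var l i).1 = \sum_(j < size l) j.+1 * nth 0 l j)%N.
Proof.
rewrite /index_iota subSS subn0 -(big_map (psi_var l) xpredT (fun x => x.1)).
rewrite (perm_big _ (perm_map_psi_var l m)) /Vml_vars big_cat big_map big1 ?add0n //.
rewrite big_flatten big_map -{1}(subn0 (size l)) -/(index_iota 0 (size l)) big_mkord.
apply: eq_bigr => d _.
by rewrite big_map big_const_seq count_predT size_iota iter_addn_0 mulnC.
Qed.

Lemma deg_infE i : deg_inf i = ~~ odd i.
Proof. by rewrite /deg_inf /=; case: odd. Qed.

Lemma deg_inf_supply N : grading_supply deg_inf N.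
Proof.
apply: (@GradingSupply _ _ (fun j => 4 * j + 3) (fun x => 2 * x) (fun x => 4 * x + 1))%N.
- by move=> a b; apply/idP/idP; lia.
- by move=> j; rewrite deg_infE oddD oddM.
- by move=> a b _ _; lia.
- by move=> a b; lia.
- by move=> x y _; apply/eqP; lia.
- by move=> x _; rewrite deg_infE oddM.
- by move=> x; rewrite deg_infE oddD oddM.
- by move=> j x _; apply/andP; split; apply/eqP; lia.
Qed.

Lemma deg_kstar_supply k N : (N <= k)%N -> grading_supply (deg_kstar k) N.
Proof.
move=> Nk; apply: (@GradingSupply _ _ (fun j => k + 2 * j + 1) id (fun x => k + 2 * x))%N.
- by move=> a b; apply/idP/idP; lia.
- by move=> j; rewrite /deg_kstar; case: leqP => //; lia.
- by [].
- by move=> a b; lia.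
- by move=> x y xN; apply/eqP; lia.
- by move=> x xN; rewrite /deg_kstar; case: leqP => //; lia.
- by move=> x; rewrite /deg_kstar; case: leqP => //; lia.
- by move=> j x xN; apply/andP; split; apply/eqP; lia.
Qed.

Unset Implicit Arguments. Set Strict Implicit.
Local Open Scope ring_scope.

Theorem mainTheorem3 (F : fieldType) (k t m : nat) (l : seq nat) :
  [pchar F] =i pred0 -> (0 < k)%N -> (1 <= t <= k)%N -> size l = t ->
  let n := (sumn l + m)%N in
  (forall g : fpoly F gvar,
     (inVml m l g /\ isTZ deg_inf m l g) <->
     (exists f : fpoly F nat, [/\ inVn n f, isTE n f & psi l n f = g])) /\
  ((\sum_(j < t) j.+1 * nth 0 l j <= k)%N ->
   forall g : fpoly F gvar,
     (inVml m l g /\ isTZ (deg_kstar k) m l g) <->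
     (exists f : fpoly F nat, [/\ inVn n f, isTE n f & psi l n f = g])).
Proof.
move=> _ _ _ size_l n; split; first exact: psi_image_isTZ (deg_inf_supply _).
move=> weight_le_k; apply: psi_image_isTZ; apply: deg_kstar_supply.
by rewrite total_psi_deg size_l.
Qed.
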